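(* Let $n\to\infty$, $N=N(n)$ and $p=p(n)$ satisfy $np\ge \left(\log\frac Nn\right)/6$ and $N\ge 3n$. Then asymptotically almost surely, for every two disjoint sets $S,T\subseteq[N]$ with $|S|=|T|=n$, the number of edges of $G\sim G(N,p)$ contained in $S\cup T$ and having at least one endpoint in $S$ is at most $18n^2p$.
   Context: $G(N,p)$ denotes the Erdős–Rényi random graph on vertex set $[N]$ in which each pair is an edge independently with probability $p$. All logarithms are natural. ''Asymptotically almost surely'' means with probability tending to $1$ as $n\to\infty$. *)

From HB Require Import structures.
From mathcomp Require Import all_boot all_order all_algebra.
From mathcomp Require Import all_classical all_reals all_analysis.
Set Implicit Arguments. Unset Strict Implicit. Unset Printing Implicit Defensive.
Import Order.TTheory GRing.Theory Num.Theory.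
Local Open Scope ring_scope.

(* Potential edges of a simple graph on [N] = 'I_N: pairs (i,j) with i < j. *)
Definition gpairs (N : nat) : {set 'I_N * 'I_N} := [set e : 'I_N * 'I_N | (val e.1 < val e.2)%N].

(* Probability, under G(N,p), that the edge set E satisfies the event A.
   A graph is its edge set E \subset gpairs N; each potential edge is
   present independently with probability p. *)
Definition gnp_prob (R : realType) (N : nat) (p : R)
    (A : pred {set 'I_N * 'I_N}) : R :=
  \sum_(E in powerset (gpairs N) | A E)
     p ^+ #|E| * (1 - p) ^+ (#|gpairs N| - #|E|).

Definition edges_ST (N : nat) (E : {set 'I_N * 'I_N}) (S T : {set 'I_N}) :=
  [set e in E | [&& e.1 \in S :|: T, e.2 \in S :|: T & (e.1 \in S) || (e.2 \in S)]].

Definition good_event (R : realType) (n N : nat) (p : R) :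
    pred {set 'I_N * 'I_N} :=
  fun E => `[< forall S T : {set 'I_N}, [disjoint S & T] ->
            #|S| = n -> #|T| = n ->
            (#|edges_ST E S T|%:R <= 18 * (n%:R) ^+ 2 * p) >].

From HB Require Import structures.
From mathcomp Require Import all_boot all_order all_algebra.
From mathcomp Require Import all_classical all_reals all_analysis.
From mathcomp Require Import ring lra.
Import Order.TTheory GRing.Theory Num.Theory numFieldNormedType.Exports.
Set Implicit Arguments. Unset Strict Implicit. Unset Printing Implicit Defensive.
Local Open Scope ring_scope.

(* The number of edges of G(N,p) inside S ∪ T
   touching S is binomial over at most 3n^2/2 potential edges, so Markov's
   inequality applied to e^(2X) gives P(X > 18 n^2 p) <= exp(-24 n^2 p).  A union
   bound over the at most C(N,n)^2 <= (eN/n)^(2n) pairs (S,T), combined with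
   n p >= ln(N/n)/6, bounds the failure probability by (en/N)^(2n) <= (e/3)^(2n),
   which tends to 0 because e < 3. *)

Section BernoulliSubsets.
Variables (R : comNzRingType) (I : finType).

Lemma sum_powerset_prod (G : {set I}) (phi : I -> bool -> R) :
  \sum_(E in powerset G) \prod_(i in G) phi i (i \in E) =
  \prod_(i in G) (phi i true + phi i false).
Proof.
rewrite [RHS]big_mkcond /=.
rewrite (eq_bigr (fun i => (if i \in G then phi i true else 0) +
                           (if i \in G then phi i false else 1))); last first.
  by move=> i _; case: (i \in G); rewrite ?add0r.
rewrite bigA_distr [RHS](bigID (fun J : {set I} => J \subset G)) /=.
rewrite [X in _ + X]big1 ?addr0; last first.
  by move=> J /subsetPn[i iJ iG]; rewrite (bigD1 i) //= iJ (negbTE iG) mul0r.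
apply: eq_big => [J|J]; first by rewrite powersetE.
rewrite powersetE => sJG; rewrite big_mkcond; apply: eq_bigr => i _.
case: ifPn => [_|iG]; first by case: (i \in J).
by rewrite (contraNF (fintype.subsetP sJG i)).
Qed.

Definition bernoulli_weight (G : {set I}) (p : R) (E : {set I}) : R :=
  p ^+ #|E| * (1 - p) ^+ (#|G| - #|E|).

Lemma bernoulli_weight_prod (G F E : {set I}) (p x : R) : E \subset G ->
  bernoulli_weight G p E * x ^+ #|E :&: F| =
  \prod_(i in G) (if i \in E then p * (if i \in F then x else 1) else 1 - p).
Proof.
move=> sEG.
rewrite (eq_bigr (fun i => (if i \in E then p else 1) *
    (if i \in E :&: F then x else 1) * (if i \in G :\: E then 1 - p else 1))); last first.
  by move=> i iG; rewrite !inE iG; case: (i \in E); case: (i \in F); rewrite ?mulr1 ?mul1r.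
have prod_in (A : {set I}) (c : R) : A \subset G -> \prod_(i in G | i \in A) c = c ^+ #|A|.
  move=> sAG; rewrite -prodr_const; apply: eq_bigl => i.
  by rewrite andb_idl // => /(fintype.subsetP sAG).
rewrite !big_split /= -!big_mkcondr /= !prod_in ?subsetDl //; last first.
  exact: fintype.subset_trans (finset.subsetIl E F) sEG.
by rewrite /bernoulli_weight mulrAC cardsD (finset.setIidPr sEG).
Qed.

Lemma bernoulli_mgf (G F : {set I}) (p x : R) :
  \sum_(E in powerset G) bernoulli_weight G p E * x ^+ #|E :&: F| =
  (1 - p + p * x) ^+ #|G :&: F|.
Proof.
pose phi i (b : bool) := if b then p * (if i \in F then x else 1) else 1 - p.
transitivity (\sum_(E in powerset G) \prod_(i in G) phi i (i \in E)).
  by apply: eq_bigr => E; rewrite powersetE => /bernoulli_weight_prod ->.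
rewrite sum_powerset_prod.
transitivity (\prod_(i in G | i \in F) (1 - p + p * x)).
  by rewrite big_mkcondr; apply: eq_bigr => i _; rewrite /phi; case: (i \in F); ring.
by rewrite -prodr_const; apply: eq_bigl => i; rewrite inE.
Qed.

Lemma sum_bernoulli_weight (G : {set I}) (p : R) :
  \sum_(E in powerset G) bernoulli_weight G p E = 1.
Proof.
have := bernoulli_mgf G finset.set0 p 1; rewrite mulr1 subrK expr1n => <-.
by apply: eq_bigr => E _; rewrite expr1n mulr1.
Qed.

End BernoulliSubsets.

Lemma ler_sum_cover (R : numDomainType) (I J : finType) (Q : pred I)
    (B : I -> pred J) (P : pred J) (w : J -> R) :
  (forall j, 0 <= w j) -> (forall j, P j -> exists2 i, Q i & B i j) ->
  \sum_(j | P j) w j <= \sum_(i | Q i) \sum_(j | B i j) w j.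
Proof.
move=> w_ge0 cover.
apply: (@le_trans _ _ (\sum_(j | P j) \sum_(i | Q i) (B i j)%:R * w j)).
  apply: ler_sum => j /cover[i Qi Bij].
  rewrite (bigD1 i) //= Bij mul1r lerDl sumr_ge0 // => k _.
  by rewrite mulr_ge0.
rewrite exchange_big /=; apply: ler_sum => i _.
rewrite big_mkcond [X in _ <= X]big_mkcond /=; apply: ler_sum => j _.
by case: (P j); case: (B i j); rewrite ?mul1r ?mul0r.
Qed.

Section BernoulliTail.
Variable R : realType.

Lemma ler_sum_tail_exp_moment (J : finType) (P : pred J) (w : J -> R) (f : J -> nat)
    (t lam : R) :
  (forall j, 0 <= w j) -> 0 <= lam ->
  \sum_(j | P j && (t < (f j)%:R)) w j <=
  expR (- (lam * t)) * \sum_(j | P j) w j * expR lam ^+ f j.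
Proof.
move=> w_ge0 lam_ge0; rewrite big_mkcondr big_distrr /=.
apply: ler_sum => j _; case: ifP => [tf|_]; last first.
  by rewrite !mulr_ge0 ?expR_ge0 ?exprn_ge0.
rewrite mulrCA -expRM_natr -expRD ler_peMr //; apply: le_trans (expR_ge1Dx _).
by rewrite lerDl addrC -mulrBr mulr_ge0 // subr_ge0 ltW.
Qed.

Lemma bernoulli_weight_ge0 (I : finType) (G E : {set I}) (p : R) :
  0 <= p <= 1 -> 0 <= bernoulli_weight G p E.
Proof. by case/andP=> p0 p1; rewrite mulr_ge0 ?exprn_ge0 ?subr_ge0. Qed.

Lemma bernoulli_tail (I : finType) (G F : {set I}) (p t lam : R) :
  0 <= p <= 1 -> 0 <= lam ->
  \sum_(E in powerset G | t < #|E :&: F|%:R) bernoulli_weight G p E <=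
  expR (p * (expR lam - 1) * #|G :&: F|%:R - lam * t).
Proof.
move=> p01 lam0; have /andP[p0 _] := p01.
apply: le_trans (ler_sum_tail_exp_moment _ _ t (fun E => bernoulli_weight_ge0 G E p01) lam0) _.
rewrite bernoulli_mgf expRD mulrC ler_wpM2r ?expR_ge0 // expRM_natr.
have -> : 1 - p + p * expR lam = 1 + p * (expR lam - 1) by ring.
have e_lam : 0 <= expR lam - 1 by rewrite subr_ge0 -expR0 ler_expR.
by rewrite lerXn2r ?nnegrE ?expR_ge0 ?expR_ge1Dx // addr_ge0 ?mulr_ge0.
Qed.

End BernoulliTail.

Definition pairs_ST (V : finType) (S T : {set V}) : {set V * V} :=
  [set e | [&& e.1 \in S :|: T, e.2 \in S :|: T & (e.1 \in S) || (e.2 \in S)]].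

Lemma edges_STE N (E : {set 'I_N * 'I_N}) (S T : {set 'I_N}) :
  edges_ST E S T = E :&: pairs_ST S T.
Proof. by apply/setP => e; rewrite !inE. Qed.

Lemma pairs_ST_setX (V : finType) (S T : {set V}) : [disjoint S & T] ->
  pairs_ST S T = finset.setX (S :|: T) (S :|: T) :\: finset.setX T T.
Proof.
move=> dST; apply/setP => -[a b]; rewrite !inE /=.
have notST c : (c \in S) && (c \in T) = false.
  by apply/negbTE/negP => /andP[cS]; rewrite (disjointFr dST cS).
move: (notST a) (notST b).
by case: (a \in S); case: (a \in T); case: (b \in S); case: (b \in T).
Qed.

Lemma card_pairs_ST (V : finType) (S T : {set V}) n : [disjoint S & T] ->
  #|S| = n -> #|T| = n -> #|pairs_ST S T| = (3 * n ^ 2)%N.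
Proof.
move=> dST cS cT; rewrite pairs_ST_setX // cardsD.
rewrite (finset.setIidPr _) ?setXS ?finset.subsetUr // !finset.cardsX.
rewrite cardsU (disjoint_setI0 dST) cards0 subn0 cS cT.
by rewrite -mulnn (_ : (n + n) * (n + n) = 3 * (n * n) + n * n)%N ?addnK //; ring.
Qed.

Lemma card_gpairs_swap N (A : {set 'I_N * 'I_N}) : A \subset gpairs N ->
  #|A :|: [set (e.2, e.1) | e in A]| = (2 * #|A|)%N.
Proof.
move=> sAG; set B := [set _ | e in A].
have cB : #|B| = #|A| by apply: card_imset; apply: inv_inj; case.
have disj : A :&: B = finset.set0.
  apply/setP => e; rewrite !inE; apply/negP => /andP[eA /imsetP[f fA eE]].
  move: (fintype.subsetP sAG e eA) (fintype.subsetP sAG f fA).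
  by rewrite !inE eE /= => /ltn_trans h /h; rewrite ltnn.
by rewrite cardsU cB disj cards0 subn0 addnn mul2n.
Qed.

Lemma card_gpairs_ST N (S T : {set 'I_N}) n : [disjoint S & T] ->
  #|S| = n -> #|T| = n -> (2 * #|gpairs N :&: pairs_ST S T| <= 3 * n ^ 2)%N.
Proof.
move=> dST cS cT; rewrite -card_gpairs_swap ?finset.subsetIl //.
rewrite -(card_pairs_ST dST cS cT); apply: subset_leq_card.
rewrite finset.subUset finset.subsetIr /=; apply/fintype.subsetP => _ /imsetP[e + ->].
by rewrite !inE => /andP[_ /and3P[-> -> eS]]; rewrite orbC.
Qed.

Section RealEstimates.
Variable R : realType.

Lemma expR1_lt3 : expR 1 < 3 :> R.
Proof.
have e6 : expR (1/6) <= 6/5 :> R.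
  have := expR_ge1Dx (- (1/6) : R); have := expRxMexpNx_1 (1/6 : R).
  have := expR_gt0 (1/6 : R); nra.
have -> : expR 1 = expR (1/6) ^+ 6 :> R.
  by rewrite -expRM_natr; congr expR; field.
have lt3 : (6/5) ^+ 6 < 3 :> R by lra.
by apply: le_lt_trans lt3; rewrite lerXn2r ?nnegrE ?expR_ge0.
Qed.

Lemma bin_mulr_le_expR (N n : nat) (x : R) : 0 <= x ->
  'C(N, n)%:R * x ^+ n <= expR (x * N%:R).
Proof.
move=> x0; rewrite expRM_natr.
apply: le_trans (_ : (x + 1) ^+ N <= _); last first.
  by rewrite lerXn2r ?nnegrE ?expR_ge0 ?addr_ge0 // addrC expR_ge1Dx.
have [nN|Nn] := leqP n N; last by rewrite bin_small // mul0r exprn_ge0 ?addr_ge0.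
rewrite exprD1n (bigD1 (Ordinal (nN : n < N.+1)%N)) //= mulrC mulr_natr lerDl.
by apply: sumr_ge0 => i _; rewrite mulrn_wge0 ?exprn_ge0.
Qed.

Lemma bin_le_expR (N n : nat) : (0 < n)%N -> (n <= N)%N ->
  'C(N, n)%:R <= expR (n%:R * (1 + ln (N%:R / n%:R))) :> R.
Proof.
move=> n0 nN; have n0R : 0 < n%:R :> R by rewrite ltr0n.
have N0R : 0 < N%:R :> R by rewrite ltr0n (leq_trans n0 nN).
have := bin_mulr_le_expR N n (ltW (divr_gt0 n0R N0R)).
rewrite mulfVK ?gt_eqF // -ler_pdivlMr ?exprn_gt0 ?divr_gt0 //.
rewrite -exprVn invf_div => /le_trans; apply.
by rewrite mulrDr mulr1 expRD (mulrC n%:R) expRM_natr lnK ?posrE ?divr_gt0.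
Qed.

End RealEstimates.

Section RandomGraph.
Variables (R : realType) (N : nat) (p : R).
Hypothesis p01 : 0 <= p <= 1.

Lemma gnp_probC (A : pred {set 'I_N * 'I_N}) :
  gnp_prob p A + gnp_prob p (fun E => ~~ A E) = 1.
Proof. by rewrite -(sum_bernoulli_weight (gpairs N) p) [RHS](bigID A). Qed.

Lemma gnp_prob_ge0 (A : pred {set 'I_N * 'I_N}) : 0 <= gnp_prob p A.
Proof. by apply: sumr_ge0 => E _; apply: bernoulli_weight_ge0. Qed.

Lemma edges_ST_tail (S T : {set 'I_N}) n : [disjoint S & T] ->
  #|S| = n -> #|T| = n ->
  \sum_(E in powerset (gpairs N) | 18 * n%:R ^+ 2 * p < #|edges_ST E S T|%:R)
    bernoulli_weight (gpairs N) p E <= expR (- (24 * (n%:R ^+ 2 * p))).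
Proof.
move=> dST cS cT; have /andP[p0 _] := p01.
under eq_bigl => E do rewrite edges_STE.
apply: le_trans (bernoulli_tail _ _ _ p01 (ler0n R 2)) _; rewrite ler_expR.
have card_le : #|gpairs N :&: pairs_ST S T|%:R <= 3/2 * n%:R ^+ 2 :> R.
  have := card_gpairs_ST dST cS cT; rewrite -(ler_nat R) !natrM expr2; lra.
have e2_le : expR 2 - 1 <= 8 :> R.
  have e2 : expR 2 = expR 1 ^+ 2 :> R by rewrite -expRM_natr mul1r.
  have := expR1_lt3 R; have := expR_gt0 (1 : R); rewrite e2; nra.
have : p * (expR 2 - 1) * #|gpairs N :&: pairs_ST S T|%:R <= p * (8 * (3/2 * n%:R ^+ 2)).
  have e2_ge : 0 <= expR 2 - 1 :> R by have := expR_ge1Dx (2 : R); lra.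
  by rewrite -mulrA ler_wpM2l // ler_pM.
lra.
Qed.

Lemma gnp_prob_not_good_le n :
  gnp_prob p (fun E : {set 'I_N * 'I_N} => ~~ good_event n p E) <=
  'C(N, n)%:R ^+ 2 * expR (- (24 * (n%:R ^+ 2 * p))).
Proof.
pose Q := [pred i : {set 'I_N} * {set 'I_N} |
  [&& [disjoint i.1 & i.2], #|i.1| == n & #|i.2| == n]].
pose B i := [pred E | (E \in powerset (gpairs N)) &&
  (18 * n%:R ^+ 2 * p < #|edges_ST E i.1 i.2|%:R)].
apply: le_trans (ler_sum_cover (Q := Q) (B := B)
  (P := fun E => (E \in powerset (gpairs N)) && ~~ good_event n p E)
  (w := bernoulli_weight (gpairs N) p) _ _) _.
- by move=> E; apply: bernoulli_weight_ge0.
- move=> E /andP[EG not_good]; apply: contrapT => no_cover.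
  move/negP: not_good; apply; apply/asboolP => S T dST cS cT.
  rewrite leNgt; apply/negP => many; apply: no_cover.
  by exists (S, T); [rewrite /= dST cS cT eqxx | apply/andP].
apply: le_trans (_ : \sum_(i | Q i) expR (- (24 * (n%:R ^+ 2 * p))) <= _).
  by apply: ler_sum => -[S T] /and3P[dST /eqP cS /eqP cT]; apply: edges_ST_tail.
rewrite sumr_const -[_ *+ _]mulr_natl ler_wpM2r ?expR_ge0 // -natrX ler_nat.
set SS := [set S : {set 'I_N} | #|S| == n].
rewrite -[in X in (_ <= X)%N](card_ord N) -card_draws -/SS -mulnn -finset.cardsX.
apply: subset_leq_card; apply/fintype.subsetP => -[S T].
by rewrite !inE unfold_in /= => /and3P[_ -> ->].
Qed.

Lemma bin_sq_tail_le_expR n : (0 < n)%N -> (3 * n <= N)%N ->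
  ln (N%:R / n%:R) / 6 <= n%:R * p ->
  'C(N, n)%:R ^+ 2 * expR (- (24 * (n%:R ^+ 2 * p))) <=
  expR (2 * (1 - ln 3)) ^+ n.
Proof.
move=> n0 nN hL; have n0R : 0 < n%:R :> R by rewrite ltr0n.
set L := ln (N%:R / n%:R : R).
have ln3_le : ln 3 <= L.
  rewrite ler_ln ?posrE ?divr_gt0 ?ltr0n ?(leq_trans _ nN) ?muln_gt0 //.
  by rewrite ler_pdivlMr // -natrM ler_nat.
have nN1 : (n <= N)%N by apply: leq_trans nN; rewrite leq_pmull.
have hC := bin_le_expR R n0 nN1.
apply: le_trans (_ : expR (n%:R * (1 + L)) ^+ 2 * expR (- (24 * (n%:R ^+ 2 * p))) <= _).
  by rewrite ler_wpM2r ?expR_ge0 // lerXn2r ?nnegrE ?expR_ge0.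
rewrite -!expRM_natr -expRD ler_expR.
have : 4 * (n%:R * L) <= 24 * (n%:R ^+ 2 * p).
  have := ler_wpM2l (ltW n0R) hL; rewrite -/L expr2; lra.
have : n%:R * ln 3 <= n%:R * L by rewrite ler_wpM2l ?ler0n.
lra.
Qed.

Lemma gnp_prob_good_ge n :
  1 - 'C(N, n)%:R ^+ 2 * expR (- (24 * (n%:R ^+ 2 * p))) <=
  gnp_prob p (good_event n p : pred {set 'I_N * 'I_N}) <= 1.
Proof.
have := gnp_probC (good_event n p : pred {set 'I_N * 'I_N}).
have := gnp_prob_ge0 (fun E : {set 'I_N * 'I_N} => ~~ good_event n p E).
have := gnp_prob_not_good_le n.
by move=> ? ? ?; apply/andP; split; lra.
Qed.

End RandomGraph.

Local Open Scope classical_set_scope.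

Theorem lemma2p5 (R : realType) (N : nat -> nat) (p : nat -> R) :
  (forall n, 0 <= p n <= 1) ->
  (forall n, (3 * n <= N n)%N) ->
  (forall n, (0 < n)%N -> ln ((N n)%:R / n%:R) / 6 <= n%:R * p n) ->
  (fun n => @gnp_prob R (N n) (p n) (@good_event R n (N n) (p n))) @ \oo --> (1 : R).
Proof.
move=> p01 hN hL; set q : R := expR (2 * (1 - ln 3)).
have q_lt1 : `|q| < 1.
  rewrite ger0_norm ?expR_ge0 // expR_lt1 pmulr_rlt0 // subr_lt0.
  by rewrite -[X in X < _](expRK 1) ltr_ln ?posrE ?expR_gt0 ?expR1_lt3.
apply: (@squeeze_cvgr _ _ _ _ (fun n => 1 - q ^+ n) (fun _ => 1)).
- exists 1%N => // n /= n0.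
  have := bin_sq_tail_le_expR n0 (hN n) (hL n n0); rewrite -/q.
  have /andP[lo hi] := gnp_prob_good_ge (N n) (p01 n) n.
  by move=> tail; rewrite hi andbT; apply: le_trans lo; lra.
- have := cvgB (cvg_cst (1 : R)) (cvg_expr q_lt1); rewrite subr0; apply.
- exact: cvg_cst.
Qed.
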